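(* Let $\mathbf D_1\in\mathcal D$. Every $\mathbf D_2\in\mathcal D$ can be written as $\mathbf D_2=\mathbf D(\mathbf D_1,\mathbf W,\mathbf v,\tau)$ with $\mathbf W\in\mathcal W_{\mathbf D_1}$, $\mathbf v\in\mathcal S^p_+$ and $\tau\ge0$ such that $\tau\|\mathbf v\|_\infty\le\pi$. Moreover, for all $j$, $$\frac2\pi\tau\mathbf v_j\le\|\mathbf d_2^j-\mathbf d_1^j\|_2=2\sin\Big(\frac{\tau\mathbf v_j}{2}\Big)\le\tau\mathbf v_j,\qquad \frac2\pi\tau\le\|\mathbf D_2-\mathbf D_1\|_F\le\tau.$$ Conversely, $\mathbf D_1=\mathbf D(\mathbf D_2,\mathbf W',\mathbf v,\tau)$ for some $\mathbf W'\in\mathcal W_{\mathbf D_2}$, with the same $\mathbf v$ and $\tau$.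
   Context: $\mathcal D$: real $m\times p$ matrices with unit $\ell_2$-norm columns; $\mathbf d^j$ denotes the $j$-th column. $\mathcal S^p_+=\{\mathbf v\in\mathbb R^p_+:\|\mathbf v\|_2=1\}$. For $\mathbf D\in\mathcal D$, $\mathcal W_{\mathbf D}=\{\mathbf W\in\mathbb R^{m\times p}:\mathrm{diag}(\mathbf W^\top\mathbf D)=\mathbf 0,\mathrm{diag}(\mathbf W^\top\mathbf W)=\mathbf 1\}$, and $\mathbf D(\mathbf D,\mathbf W,\mathbf v,t)=\mathbf D\,\mathrm{Diag}[\cos(\mathbf vt)]+\mathbf W\,\mathrm{Diag}[\sin(\mathbf vt)]$ (cos, sin entrywise). *)

From HB Require Import structures.
From mathcomp Require Import all_boot all_order all_algebra.
From mathcomp Require Import all_classical all_reals all_analysis.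
Set Implicit Arguments. Unset Strict Implicit. Unset Printing Implicit Defensive.
Import Order.TTheory GRing.Theory Num.Theory.
Local Open Scope ring_scope.

Section Defs.
Variable R : realType.

Definition colnorm m p (A : 'M[R]_(m, p)) (j : 'I_p) : R :=
  Num.sqrt (\sum_(i < m) A i j ^+ 2).

Definition frob m p (A : 'M[R]_(m, p)) : R :=
  Num.sqrt (\sum_(i < m) \sum_(j < p) A i j ^+ 2).

Definition inD m p (D : 'M[R]_(m, p)) : Prop := forall j, colnorm D j = 1.

Definition inW m p (D W : 'M[R]_(m, p)) : Prop :=
  forall j : 'I_p, (W^T *m D) j j = 0 /\ (W^T *m W) j j = 1.

Definition vnorm p (v : 'cV[R]_p) : R := Num.sqrt (\sum_(i < p) v i 0 ^+ 2).

Definition infnorm p (v : 'cV[R]_p) : R := \big[Num.max/0]_(i < p) `|v i 0|.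

Definition inSplus p (v : 'cV[R]_p) : Prop :=
  (forall i, 0 <= v i 0) /\ vnorm v = 1.

Definition Dcurve m p (D W : 'M[R]_(m, p)) (v : 'cV[R]_p) (t : R) : 'M[R]_(m, p) :=
  D *m diag_mx (\row_j cos (v j 0 * t)) + W *m diag_mx (\row_j sin (v j 0 * t)).

End Defs.

(* Column by column, d1 and d2 are unit vectors at angle theta_j = acos <d1, d2>
   in [0, pi].  The component of d2 orthogonal to d1 has length sin theta_j, so
   d2 = cos theta_j d1 + sin theta_j w_j for a unit w_j orthogonal to d1 (an
   arbitrary one when d2 = +-d1; this is where m >= 2 is needed).  Writing the
   nonnegative vector theta as tau v with tau = |theta| and v in S^p_+ gives
   D2 = D(D1, W, v, tau), and exchanging D1 and D2 leaves theta unchanged.  The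
   chord |d2 - d1| equals 2 sin (theta_j / 2), which Jordan's inequality
   2x/pi <= sin x <= x on [0, pi/2] places between 2 theta_j / pi and theta_j;
   summing squares gives the Frobenius bounds. *)

From HB Require Import structures.
From mathcomp Require Import all_boot all_order all_algebra.
From mathcomp Require Import all_classical all_reals all_analysis.
From mathcomp Require Import ring lra.
Set Implicit Arguments.
Unset Strict Implicit.
Unset Printing Implicit Defensive.
Import Order.TTheory GRing.Theory Num.Theory.
Import numFieldNormedType.Exports.
Local Open Scope ring_scope.

Section Trigonometry.
Variable R : realType.

Lemma sin_le_id (x : R) : 0 <= x -> sin x <= x.
Proof.
move=> x_ge0; pose g (y : R) := y - sin y.
have dg (y : R) : is_derive y 1 g (1 - cos y) by apply: is_deriveB.
have cg : continuous g.
  by move=> y; apply/differentiable_continuous/derivable1_diffP; exact: ex_derive.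
have : g 0 <= g x.
  apply: (@ger0_derive1_le_cc R g 0 x) => //; rewrite ?in_itv /= ?lexx ?x_ge0 //.
  - by move=> y _; rewrite derive1E derive_val subr_ge0 cos_le1.
  - exact: continuous_subspaceT.
by rewrite /g sin0 subr0 subr_ge0.
Qed.

Lemma ler_cos : {in `[0, pi] &, {mono (@cos R) : x y /~ x <= y}}.
Proof. by apply: le_nmono_in => x y xI yI; rewrite ltr_cos. Qed.

Lemma jordan_sin (x : R) : 0 <= x <= pi / 2 -> 2 / pi * x <= sin x.
Proof.
move=> /andP[x_ge0 x_le]; have pi_gt0 := pi_gt0 R.
set c := 2 / pi.
have c_ge0 : 0 <= c by rewrite /c divr_ge0 // ltW.
have c_le1 : c <= 1 by rewrite /c ler_pdivrMr // mul1r pi_ge2.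
pose h (y : R) := sin y - c * y.
have dh (y : R) : is_derive y (1 : R) h (cos y - c * 1).
  by apply: is_deriveB; exact: is_deriveZ.
have ch : continuous h.
  by move=> y; apply/differentiable_continuous/derivable1_diffP; exact: ex_derive.
have h0 : h 0 = 0 by rewrite /h sin0 mulr0 subrr.
have hpi : h (pi / 2) = 0.
  by rewrite /h sin_pihalf /c mulrA divfK ?gt_eqF // divff // subrr.
(* h' = cos - c: h increases up to z = acos c and decreases afterwards *)
have c_bnd : -1 <= c <= 1 by rewrite c_le1 andbT (le_trans _ c_ge0) // lerN10.
set z := acos c.
have [z_ge0 z_le] : 0 <= z /\ z <= pi by rewrite acos_ge0 ?acos_lepi.
have cos_z : cos z = c by rewrite acosK // in_itv.
have z_in : z \in `[0, pi] by rewrite in_itv /= z_ge0.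
have in0pi (y : R) : 0 <= y -> y <= pi -> y \in `[0, pi] by rewrite in_itv /= => -> ->.
suff : 0 <= h x by rewrite /h subr_ge0.
have [x_le_z | z_lt_x] := leP x z.
- rewrite -h0; apply: (@ger0_derive1_le_cc R h 0 z) => //;
    rewrite ?in_itv /= ?lexx ?x_ge0 //.
  + move=> y; rewrite in_itv /= => /andP[y_gt0 y_lt].
    have y_in : y \in `[0, pi] by rewrite in0pi ?ltW ?(lt_le_trans y_lt).
    by rewrite derive1E derive_val mulr1 subr_ge0 -cos_z ler_cos // ltW.
  + exact: continuous_subspaceT.
- have z_le_pi2 : z <= pi / 2 by rewrite (le_trans (ltW z_lt_x)).
  rewrite -hpi; apply: (@ler0_derive1_le_cc R h z (pi / 2)) => //;
    rewrite ?in_itv /= ?lexx ?z_le_pi2 ?x_le ?(ltW z_lt_x) //.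
  + move=> y; rewrite in_itv /= => /andP[y_gt y_lt].
    have y_in : y \in `[0, pi].
      by rewrite in0pi ?(le_trans z_ge0 (ltW y_gt)) //; lra.
    by rewrite derive1E derive_val mulr1 subr_le0 -cos_z ler_cos // ltW.
  + exact: continuous_subspaceT.
Qed.

Lemma chord_bounds (t : R) : 0 <= t <= pi ->
  2 / pi * t <= 2 * sin (t / 2) <= t.
Proof.
move=> /andP[t_ge0 t_le]; have pi_gt0 := pi_gt0 R.
have lo : 2 / pi * (t / 2) <= sin (t / 2) by apply: jordan_sin; apply/andP; split; lra.
have hi : sin (t / 2) <= t / 2 by apply: sin_le_id; lra.
have -> : 2 / pi * t = 2 * (2 / pi * (t / 2)).
  by rewrite [RHS]mulrCA (mulrC 2 (t / 2)) divfK.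
by apply/andP; split; lra.
Qed.

End Trigonometry.

Section Dot.
Variables (R : realType) (m : nat).
Implicit Types (u v w r : 'cV[R]_m) (a b : R).

Definition dot u v : R := \sum_(i < m) u i 0 * v i 0.

Lemma dotC u v : dot u v = dot v u.
Proof. by apply: eq_bigr => i _; rewrite mulrC. Qed.

Lemma dotDZl a b u v w : dot (a *: u + b *: v) w = a * dot u w + b * dot v w.
Proof. by rewrite /dot !mulr_sumr -big_split; apply: eq_bigr => i _; rewrite !mxE /=; ring. Qed.

Lemma dotZl a u v : dot (a *: u) v = a * dot u v.
Proof. by rewrite /dot mulr_sumr; apply: eq_bigr => i _; rewrite !mxE mulrA. Qed.

Lemma dotZr a u v : dot u (a *: v) = a * dot u v.
Proof. by rewrite dotC dotZl dotC. Qed.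

Lemma dotDZ_sqr a b u v :
  dot (a *: u + b *: v) (a *: u + b *: v) =
  a ^+ 2 * dot u u + 2 * a * b * dot u v + b ^+ 2 * dot v v.
Proof. by rewrite dotDZl !(dotC _ (_ + _)) !dotDZl (dotC v u); ring. Qed.

Lemma dot_ge0 u : 0 <= dot u u.
Proof. by apply: sumr_ge0 => i _; rewrite -expr2 sqr_ge0. Qed.

Lemma dot_eq0 u : dot u u = 0 -> u = 0.
Proof.
move=> uu0; apply/matrixP => i j; rewrite ord1 mxE; apply/eqP.
by rewrite -sqrf_eq0 expr2 (psumr_eq0P _ uu0) // => k _; rewrite -expr2 sqr_ge0.
Qed.

Lemma dot_delta i u : dot (delta_mx i 0) u = u i 0.
Proof.
rewrite /dot (bigD1 i) //= big1 => [|k /negbTE ki]; last by rewrite mxE ki mul0r.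
by rewrite mxE !eqxx mul1r addr0.
Qed.

Lemma dot_unit_bound u v : dot u u = 1 -> dot v v = 1 -> -1 <= dot u v <= 1.
Proof.
move=> uu vv; have sum_ge0 := dot_ge0 (1 *: u + 1 *: v).
have diff_ge0 := dot_ge0 (1 *: u + (-1) *: v).
rewrite !dotDZ_sqr uu vv in sum_ge0 diff_ge0.
by apply/andP; split; lra.
Qed.

Lemma exists_unit_orthogonal u : (2 <= m)%N ->
  exists w, dot w u = 0 /\ dot w w = 1.
Proof.
move=> m_ge2; pose i0 := Ordinal (ltnW m_ge2); pose i1 := Ordinal m_ge2.
have e01 : dot (delta_mx i0 0) (delta_mx i1 0) = 0 by rewrite dot_delta mxE.
have ee i : dot (delta_mx i 0) (delta_mx i 0) = 1 by rewrite dot_delta mxE !eqxx.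
have [u0 | u_ne0] := eqVneq (u i0 0 ^+ 2 + u i1 0 ^+ 2) 0.
  have ui0 : u i0 0 = 0.
    by apply/eqP; rewrite -sqrf_eq0 eq_le sqr_ge0 andbT -u0 lerDl sqr_ge0.
  by exists (delta_mx i0 0); rewrite dot_delta ui0 ee.
(* the rotation by a right angle of the (i0, i1)-component of u *)
pose r : 'cV[R]_m := (- u i1 0) *: delta_mx i0 0 + u i0 0 *: delta_mx i1 0.
have ru : dot r u = 0 by rewrite dotDZl !dot_delta; ring.
have rr : dot r r = u i0 0 ^+ 2 + u i1 0 ^+ 2 by rewrite dotDZ_sqr !ee e01; ring.
have rr_gt0 : 0 < dot r r by rewrite lt_def rr u_ne0 addr_ge0 ?sqr_ge0.
exists ((Num.sqrt (dot r r))^-1 *: r); rewrite dotZl ru mulr0 dotZr dotZl.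
by rewrite mulrA -invfM -expr2 sqr_sqrtr ?ltW // mulVf ?gt_eqF.
Qed.

Lemma orthogonal_scale_unit u r s : (2 <= m)%N -> 0 <= s ->
  dot r u = 0 -> dot r r = s ^+ 2 ->
  exists w, [/\ dot w u = 0, dot w w = 1 & r = s *: w].
Proof.
move=> m_ge2 s_ge0 ru rr; have [s0|s_ne0] := eqVneq s 0.
  have [w [wu ww]] := exists_unit_orthogonal u m_ge2.
  by exists w; rewrite s0 scale0r; split => //; apply: dot_eq0; rewrite rr s0 expr0n.
exists (s^-1 *: r); rewrite scalerA divff // scale1r dotZl ru mulr0 dotZr dotZl.
by rewrite rr mulrA -expr2 -exprMn mulVf ?expr1n.
Qed.

Lemma unit_rotation_decomp u v : (2 <= m)%N ->
  dot u u = 1 -> dot v v = 1 ->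
  exists w, [/\ dot w u = 0, dot w w = 1 &
    v = cos (acos (dot u v)) *: u + sin (acos (dot u v)) *: w].
Proof.
move=> m_ge2 uu vv; have c_bnd := dot_unit_bound uu vv.
rewrite acosK ?sin_acos ?in_itv //; set c := dot u v in c_bnd *.
pose r := 1 *: v + (- c) *: u.
have ru : dot r u = 0 by rewrite dotDZl uu dotC -/c; ring.
have rr : dot r r = Num.sqrt (1 - c ^+ 2) ^+ 2.
  rewrite dotDZ_sqr uu vv dotC -/c sqr_sqrtr; first by ring.
  by case/andP: c_bnd => ? ?; nra.
have [w [wu ww r_w]] := orthogonal_scale_unit m_ge2 (sqrtr_ge0 _) ru rr.
by exists w; split => //; rewrite -r_w /r scale1r scaleNr addrC subrK.
Qed.

Lemma chord_length u v : dot u u = 1 -> dot v v = 1 ->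
  Num.sqrt (dot (v - u) (v - u)) = 2 * sin (acos (dot u v) / 2).
Proof.
move=> uu vv; have c_bnd := dot_unit_bound uu vv.
set t := acos (dot u v).
have [t_ge0 t_le] : 0 <= t /\ t <= pi by rewrite acos_ge0 ?acos_lepi.
have cos_t : dot u v = 1 - 2 * sin (t / 2) ^+ 2.
  rewrite -[dot u v]acosK ?in_itv // -/t {1}(splitr t) -mulr2n.
  by rewrite cos_mulr2n cos2sin2 mulr2n; ring.
have -> : v - u = 1 *: v + (-1) *: u by rewrite scale1r scaleN1r.
rewrite dotDZ_sqr uu vv dotC cos_t.
have -> : 1 ^+ 2 * 1 + 2 * 1 * -1 * (1 - 2 * sin (t / 2) ^+ 2) + (-1) ^+ 2 * 1
  = (2 * sin (t / 2)) ^+ 2 by ring.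
rewrite sqrtr_sqr ger0_norm // mulr_ge0 // sin_ge0_pi //.
by rewrite divr_ge0 //= ler_pdivrMr //; have := pi_gt0 R; lra.
Qed.

End Dot.

Section Columns.
Variables (R : realType) (m p : nat).
Implicit Types (A B D E W : 'M[R]_(m, p)) (w : 'I_p -> 'cV[R]_m).

Lemma colnorm_dot A j : colnorm A j = Num.sqrt (dot (col j A) (col j A)).
Proof. by rewrite /colnorm /dot; congr Num.sqrt; apply: eq_bigr => i _; rewrite !mxE expr2. Qed.

Lemma inD_dot D : inD D -> forall j, dot (col j D) (col j D) = 1.
Proof.
move=> hD j; have := hD j; rewrite colnorm_dot => unit_j.
by rewrite -[LHS]sqr_sqrtr ?dot_ge0 // unit_j expr1n.
Qed.

Lemma frob_colnorm A : frob A = vnorm (\col_j colnorm A j).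
Proof.
rewrite /frob /vnorm exchange_big; congr Num.sqrt; apply: eq_bigr => j _.
by rewrite mxE /colnorm sqr_sqrtr // sumr_ge0 // => i _; rewrite sqr_ge0.
Qed.

Lemma trmx_mul_diag A B j : (A^T *m B) j j = dot (col j A) (col j B).
Proof. by rewrite !mxE; apply: eq_bigr => i _; rewrite !mxE. Qed.

Definition mx_of_cols w : 'M[R]_(m, p) := \matrix_(i, j) w j i 0.

Lemma col_mx_of_cols w j : col j (mx_of_cols w) = w j.
Proof. by apply/matrixP => i k; rewrite ord1 !mxE. Qed.

Lemma Dcurve_of_cols D E w (v : 'cV[R]_p) t :
  (forall j, [/\ dot (w j) (col j D) = 0, dot (w j) (w j) = 1 &
     col j E = cos (t * v j 0) *: col j D + sin (t * v j 0) *: w j]) ->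
  inW D (mx_of_cols w) /\ E = Dcurve D (mx_of_cols w) v t.
Proof.
move=> hw; split=> [j|]; first by have [? ? _] := hw j; rewrite !trmx_mul_diag col_mx_of_cols.
apply/matrixP => i j; have [_ _ /matrixP/(_ i 0)] := hw j.
by rewrite /Dcurve !mul_mx_diag !mxE (mulrC (v j 0)) => ->; ring.
Qed.

End Columns.

Section NonnegPolar.
Variables (R : realType) (p : nat).
Implicit Types (u v : 'cV[R]_p).

Lemma vnorm_dot u : vnorm u = Num.sqrt (dot u u).
Proof. by rewrite /vnorm /dot; congr Num.sqrt; apply: eq_bigr => i _; rewrite expr2. Qed.

Lemma vnormZ a u : 0 <= a -> vnorm (a *: u) = a * vnorm u.
Proof.
move=> a_ge0; rewrite !vnorm_dot dotZl dotZr mulrA sqrtrM ?mulr_ge0 //.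
by rewrite -expr2 sqrtr_sqr ger0_norm.
Qed.

Lemma ler_vnorm u v : (forall i, 0 <= u i 0 <= v i 0) -> vnorm u <= vnorm v.
Proof.
move=> uv; rewrite !vnorm_dot ler_wsqrtr // ler_sum // => i _.
by have /andP[u_ge0 u_le] := uv i; rewrite ler_pM.
Qed.

Lemma nonneg_polar u : (0 < p)%N -> (forall i, 0 <= u i 0) ->
  exists v, inSplus v /\ u = vnorm u *: v.
Proof.
move=> p_gt0 u_ge0; have [u0 | u_ne0] := eqVneq (vnorm u) 0.
  exists (delta_mx (Ordinal p_gt0) 0); rewrite u0 scale0r.
  split; last by apply: dot_eq0; rewrite -[dot _ _]sqr_sqrtr ?dot_ge0 // -vnorm_dot u0 expr0n.
  by split=> [i|]; rewrite ?mxE ?ler0n // vnorm_dot dot_delta mxE !eqxx sqrtr1.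
have u_gt0 : 0 < vnorm u by rewrite lt_def u_ne0 vnorm_dot sqrtr_ge0.
exists ((vnorm u)^-1 *: u); rewrite scalerA divff // scale1r; split=> //.
have inv_ge0 : 0 <= (vnorm u)^-1 by rewrite invr_ge0 ltW.
split=> [i|]; first by rewrite mxE mulr_ge0.
by rewrite vnormZ // mulVf.
Qed.

Lemma mulr_infnorm_le v t c : 0 <= c -> (forall i, t * `|v i 0| <= c) ->
  t * infnorm v <= c.
Proof.
move=> c_ge0 v_le; apply: (big_ind (fun x => t * x <= c)) => //; first by rewrite mulr0.
by move=> x y tx ty; rewrite maxEle; case: ifP.
Qed.

End NonnegPolar.

Lemma frob_between (R : realType) (m p : nat) (A : 'M[R]_(m, p)) (u : 'cV[R]_p) k :
  0 <= k -> (forall j, 0 <= u j 0) -> (forall j, k * u j 0 <= colnorm A j <= u j 0) ->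
  k * vnorm u <= frob A <= vnorm u.
Proof.
move=> k_ge0 u_ge0 u_col; rewrite frob_colnorm -vnormZ //.
apply/andP; split; apply: ler_vnorm => j; rewrite !mxE; have /andP[lo hi] := u_col j.
  by rewrite lo mulr_ge0.
by rewrite hi andbT (le_trans _ lo) // mulr_ge0.
Qed.

Theorem lemma1 (R : realType) (m p : nat) (hm : (2 <= m)%N) (hp : (0 < p)%N)
  (D1 D2 : 'M[R]_(m, p)) (hD1 : inD D1) (hD2 : inD D2) :
  exists (W : 'M[R]_(m, p)) (v : 'cV[R]_p) (tau : R),
    [/\ inW D1 W, inSplus v, 0 <= tau, tau * infnorm v <= pi
      & D2 = Dcurve D1 W v tau] /\
    [/\
      (forall j : 'I_p,
         2 / pi * (tau * v j 0) <= colnorm (D2 - D1) j /\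
         colnorm (D2 - D1) j = 2 * sin (tau * v j 0 / 2) /\
         2 * sin (tau * v j 0 / 2) <= tau * v j 0),
      2 / pi * tau <= frob (D2 - D1) <= tau
    & exists W' : 'M[R]_(m, p), inW D2 W' /\ D1 = Dcurve D2 W' v tau].
Proof.
have u1 := inD_dot hD1; have u2 := inD_dot hD2.
pose th : 'cV[R]_p := \col_j acos (dot (col j D1) (col j D2)).
have th_bnd j : 0 <= th j 0 <= pi.
  by rewrite mxE acos_ge0 ?acos_lepi ?dot_unit_bound.
have [v [v_unit th_v]] := nonneg_polar hp (fun j => (andP (th_bnd j)).1).
set tau := vnorm th in th_v.
have angle j : acos (dot (col j D1) (col j D2)) = tau * v j 0.
  by have := congr1 (fun u : 'cV_p => u j 0) th_v; rewrite !mxE.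
have chord j : colnorm (D2 - D1) j = 2 * sin (tau * v j 0 / 2).
  by rewrite colnorm_dot linearB /= chord_length ?angle.
have bounds j : 2 / pi * (tau * v j 0) <= 2 * sin (tau * v j 0 / 2) <= tau * v j 0.
  by have := th_bnd j; rewrite mxE angle => /chord_bounds.
have [w hw] := choice (fun j => unit_rotation_decomp hm (u1 j) (u2 j)).
have [w' hw'] := choice (fun j => unit_rotation_decomp hm (u2 j) (u1 j)).
have [W_D1 D2_curve] : inW D1 (mx_of_cols w) /\ D2 = Dcurve D1 (mx_of_cols w) v tau.
  by apply: Dcurve_of_cols => j; rewrite -angle.
have [W_D2 D1_curve] : inW D2 (mx_of_cols w') /\ D1 = Dcurve D2 (mx_of_cols w') v tau.
  by apply: Dcurve_of_cols => j; rewrite -angle (dotC (col j D1)).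
have tau_ge0 : 0 <= tau by rewrite /tau vnorm_dot sqrtr_ge0.
exists (mx_of_cols w), v, tau; split; first split=> //.
  apply: mulr_infnorm_le => [|j]; first exact: pi_ge0.
  by rewrite ger0_norm ?v_unit.1 // -angle acos_lepi ?dot_unit_bound.
split=> [j||]; first by rewrite chord; have /andP[] := bounds j.
- apply: frob_between => [|j|j]; rewrite ?divr_ge0 ?pi_ge0 // mxE angle.
    by rewrite mulr_ge0 ?v_unit.1.
  by rewrite chord bounds.
- by exists (mx_of_cols w').
Qed.
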